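(* Let $(s_n)$ be a sequence of nonnegative reals and $D\in\mathbb{N}\setminus\{0\}$ with $s_n\leq D$ for all $n$. Let $(\alpha_n)\subset\,]0,1[$, $(r_n),(v_n)\subset\mathbb{R}$, $(\gamma_n)\subset[0,\infty)$, and let ${\rm A}:\mathbb{N}\to\mathbb{N}$ be monotone with $\sum_{i=0}^{{\rm A}(k)}\alpha_i\geq k$ for all $k\in\mathbb{N}$. Let $k,n,p\in\mathbb{N}$ and assume (i) $\forall m\in[n,p]\ \big(v_m\leq\frac{1}{4(k+1)(p+1)}\ \wedge\ r_m\leq\frac{1}{4(k+1)}\big)$; (ii) $\forall m\in\mathbb{N}\ \big(\sum_{i=n}^{n+m}\gamma_i\leq\frac{1}{4(k+1)}\big)$; (iii) $\forall m\in\mathbb{N}\ \big(s_{m+1}\leq(1-\alpha_m)(s_m+v_m)+\alpha_m r_m+\gamma_m\big)$. Then $s_m\leq\frac{1}{k+1}$ for all $m\in[\sigma_1(k,n),p]$, where $\sigma_1(k,n):={\rm A}\big(n+\lceil\ln(4D(k+1))\rceil\big)+1$.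
   Context: A function $f:\mathbb{N}\to\mathbb{N}$ is monotone if $f(n)\leq f(n+1)$ for all $n$. $[a,b]$ denotes the set of natural numbers $m$ with $a\leq m\leq b$ (empty if $a>b$). *)

From Stdlib Require Import Reals Lra Lia ZArith.
Open Scope R_scope.

Definition floorR (x : R) : Z := Int_part x.
Definition ceilR (x : R) : Z := (- Int_part (- x))%Z.

Definition monotone_nat (f : nat -> nat) : Prop := forall n, (f n <= f (S n))%nat.

Definition sum_range (f : nat -> R) (a b : nat) : R := sum_f a b f.

Definition sigma1 (A : nat -> nat) (D : nat) (k n : nat) : nat :=
  (A (n + Z.to_nat (ceilR (ln (4 * INR D * (INR k + 1)))))%nat + 1)%nat.

From Stdlib Require Import Reals Lra Lia ZArith.
Open Scope R_scope.

(* With [eps = 1/(4(k+1))], the excess [u m = max (s m - eps) 0] satisfies the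
   linear recursion [u (m+1) <= (1 - alpha m) u m + w + gamma m] on [[n, p]],
   where [w = 1/(4(k+1)(p+1))].  Unrolling from [m = n] gives
   [u (n+j) <= D * prod_(i<j) (1 - alpha (n+i)) + j w + sum_(i<j) gamma (n+i)].
   Since [1 - x <= exp (-x)], the product is at most [exp (- sum_(i<j) alpha (n+i))],
   and by the rate A this sum is at least [ceil (ln (4D(k+1)))] once
   [n + j >= sigma1]; so each of the three terms is at most [eps], and
   [s (n+j) <= u (n+j) + eps <= 4 eps]. *)

Fixpoint seg_sum (f : nat -> R) (n j : nat) : R :=
  match j with O => 0 | S j' => seg_sum f n j' + f (n + j')%nat end.

Fixpoint seg_prod (f : nat -> R) (n j : nat) : R :=
  match j with O => 1 | S j' => seg_prod f n j' * f (n + j')%nat end.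

Lemma seg_sum_sum_f (f : nat -> R) n j : seg_sum f n (S j) = sum_f n (n + j) f.
Proof.
  unfold sum_f. replace (n + j - n)%nat with j by lia.
  induction j as [|j IH].
  - simpl. rewrite Nat.add_0_r. lra.
  - change (seg_sum f n (S (S j))) with (seg_sum f n (S j) + f (n + S j)%nat).
    rewrite IH. simpl. do 2 f_equal. lia.
Qed.

Lemma seg_sum_split f n j : seg_sum f 0 (n + j) = seg_sum f 0 n + seg_sum f n j.
Proof.
  induction j as [|j IH]; simpl.
  - rewrite Nat.add_0_r. lra.
  - rewrite Nat.add_succ_r. simpl. rewrite IH. lra.
Qed.

Lemma seg_sum_const_add (c : R) f n j :
  seg_sum (fun i => c + f i) n j = INR j * c + seg_sum f n j.
Proof.
  induction j as [|j IH]; simpl seg_sum; [simpl; lra|].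
  rewrite IH, S_INR. lra.
Qed.

Lemma seg_sum_nonneg f n j : (forall i, 0 <= f i) -> 0 <= seg_sum f n j.
Proof.
  intro Hf. induction j as [|j IH]; simpl; [lra|]. specialize (Hf (n + j)%nat). lra.
Qed.

Lemma seg_sum_le_length f n j : (forall i, f i <= 1) -> seg_sum f n j <= INR j.
Proof.
  intro Hf. induction j as [|j IH]; simpl seg_sum; [simpl; lra|].
  rewrite S_INR. specialize (Hf (n + j)%nat). lra.
Qed.

Lemma seg_sum_le_mono f n j j' :
  (forall i, 0 <= f i) -> (j <= j')%nat -> seg_sum f n j <= seg_sum f n j'.
Proof.
  intros Hf Hj. induction Hj as [|j' _ IH]; [lra|].
  simpl. specialize (Hf (n + j')%nat). lra.
Qed.

Lemma seg_prod_one_minus_le_exp a n j :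
  (forall i, 0 <= a i <= 1) ->
  0 <= seg_prod (fun i => 1 - a i) n j <= exp (- seg_sum a n j).
Proof.
  intro Ha. induction j as [|j IH]; simpl.
  - rewrite Ropp_0, exp_0. lra.
  - specialize (Ha (n + j)%nat). pose proof (exp_ineq1_le (- a (n + j)%nat)).
    rewrite Ropp_plus_distr, exp_plus. split.
    + apply Rmult_le_pos; lra.
    + apply Rmult_le_compat; lra.
Qed.

Lemma exp_opp_le_inv (X t : R) : 0 < X -> ln X <= t -> exp (- t) <= / X.
Proof.
  intros HX Ht. rewrite <- (exp_ln X HX), <- exp_Ropp.
  destruct (Rle_lt_or_eq_dec _ _ Ht) as [Hlt | ->]; [|lra].
  apply Rlt_le, exp_increasing. lra.
Qed.

Lemma le_ceilR_to_nat (x : R) : x <= INR (Z.to_nat (ceilR x)).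
Proof.
  assert (Hceil : x <= IZR (ceilR x)).
  { unfold ceilR. rewrite opp_IZR. destruct (base_Int_part (- x)). lra. }
  destruct (Z_le_gt_dec 0 (ceilR x)).
  - rewrite INR_IZR_INZ, Z2Nat.id; lra || lia.
  - pose proof (pos_INR (Z.to_nat (ceilR x))).
    assert (IZR (ceilR x) < 0) by (apply IZR_lt; lia). lra.
Qed.

Lemma seg_sum_tail_ge a n M (x : R) :
  (forall i, 0 <= a i <= 1) -> 0 <= x -> INR n + x <= seg_sum a 0 M ->
  (n <= M)%nat /\ x <= seg_sum a n (M - n).
Proof.
  intros Ha Hx Hsum.
  assert (Hle1 : forall i, a i <= 1) by (intro i; apply Ha).
  assert (HnM : (n <= M)%nat).
  { apply INR_le. pose proof (seg_sum_le_length a 0 M Hle1). lra. }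
  split; [exact HnM|].
  rewrite <- (Nat.sub_add n M HnM), Nat.add_comm, seg_sum_split in Hsum.
  pose proof (seg_sum_le_length a 0 n Hle1). lra.
Qed.

Lemma linear_recursion_unroll (a c u : nat -> R) (n j : nat) (B : R) :
  (forall i, 0 <= a i <= 1) -> (forall i, 0 <= c i) -> u n <= B ->
  (forall i, (i < j)%nat ->
     u (S (n + i)) <= (1 - a (n + i)%nat) * u (n + i)%nat + c (n + i)%nat) ->
  u (n + j)%nat <= seg_prod (fun i => 1 - a i) n j * B + seg_sum c n j.
Proof.
  intros Ha Hc Hu0 Hrec. induction j as [|j IH].
  - simpl. rewrite Nat.add_0_r. lra.
  - rewrite Nat.add_succ_r. simpl seg_prod; simpl seg_sum.
    pose proof (IH (fun i Hi => Hrec i (Nat.lt_lt_succ_r _ _ Hi))) as Hj.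
    pose proof (Hrec j (Nat.lt_succ_diag_r j)) as Hstep.
    pose proof (seg_sum_nonneg c n j Hc). specialize (Ha (n + j)%nat).
    assert (Hmul : (1 - a (n + j)%nat) * u (n + j)%nat <=
      (1 - a (n + j)%nat) * (seg_prod (fun i => 1 - a i) n j * B + seg_sum c n j))
      by (apply Rmult_le_compat_l; lra).
    nra.
Qed.

Lemma excess_step (a s s' v r g eps w : R) :
  0 <= a <= 1 -> 0 <= g -> 0 <= w -> v <= w -> r <= eps ->
  s' <= (1 - a) * (s + v) + a * r + g ->
  Rmax (s' - eps) 0 <= (1 - a) * Rmax (s - eps) 0 + (w + g).
Proof.
  intros Ha Hg Hw Hv Hr Hs'.
  pose proof (Rmax_l (s - eps) 0). pose proof (Rmax_r (s - eps) 0).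
  assert ((1 - a) * v <= w) by (destruct (Rle_dec v 0); nra).
  apply Rmax_lub; nra.
Qed.

Lemma rate_seg_sum_ge (a : nat -> R) (A : nat -> nat) (n K m : nat) :
  (forall i, 0 <= a i <= 1) -> (forall kk, sum_range a 0 (A kk) >= INR kk) ->
  (A (n + K) < m)%nat -> (n <= m)%nat /\ INR K <= seg_sum a n (m - n).
Proof.
  intros Ha HA Hm. apply seg_sum_tail_ge; [exact Ha | apply pos_INR |].
  specialize (HA (n + K)%nat). rewrite plus_INR in HA.
  assert (Hsum : sum_range a 0 (A (n + K)%nat) = seg_sum a 0 (S (A (n + K)%nat)))
    by (symmetry; exact (seg_sum_sum_f a 0 _)).
  pose proof (seg_sum_le_mono a 0 _ _ (fun i => proj1 (Ha i)) Hm). lra.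
Qed.

Lemma excess_unroll (s alpha r v gamma : nat -> R) (B eps w : R) (n j : nat) :
  (forall i, 0 <= alpha i <= 1) -> (forall i, 0 <= gamma i) -> 0 <= w ->
  0 <= B -> s n - eps <= B ->
  (forall i, (i < j)%nat -> v (n + i)%nat <= w /\ r (n + i)%nat <= eps) ->
  (forall m, s (S m) <= (1 - alpha m) * (s m + v m) + alpha m * r m + gamma m) ->
  s (n + j)%nat <=
    eps + seg_prod (fun i => 1 - alpha i) n j * B + (INR j * w + seg_sum gamma n j).
Proof.
  intros Ha Hg Hw HB Hsn Hvr Hrec.
  pose proof (Rmax_l (s (n + j)%nat - eps) 0).
  enough (Rmax (s (n + j)%nat - eps) 0 <=
            seg_prod (fun i => 1 - alpha i) n j * B + (INR j * w + seg_sum gamma n j))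
    by lra.
  rewrite <- seg_sum_const_add.
  apply (linear_recursion_unroll alpha (fun i => w + gamma i) (fun m => Rmax (s m - eps) 0)).
  - exact Ha.
  - intro i. specialize (Hg i). lra.
  - now apply Rmax_lub.
  - intros i Hi. destruct (Hvr i Hi) as [Hv Hr].
    now apply excess_step with (v := v (n + i)%nat) (r := r (n + i)%nat).
Qed.

Theorem mainTheorem5
  (s : nat -> R) (D : nat)
  (alpha r v gamma : nat -> R) (A : nat -> nat)
  (k n p : nat)
  (Hs_nonneg : forall m, 0 <= s m)
  (HD : (D <> 0)%nat)
  (Hs_bound : forall m, s m <= INR D)
  (Halpha : forall m, 0 < alpha m < 1)
  (Hgamma : forall m, 0 <= gamma m)
  (HA_mono : monotone_nat A)
  (HA_rate : forall kk, sum_range alpha 0 (A kk) >= INR kk)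
  (Hi : forall m, (n <= m <= p)%nat ->
          v m <= 1 / (4 * (INR k + 1) * (INR p + 1)) /\ r m <= 1 / (4 * (INR k + 1)))
  (Hii : forall m, sum_range gamma n (n + m) <= 1 / (4 * (INR k + 1)))
  (Hiii : forall m,
          s (S m) <= (1 - alpha m) * (s m + v m) + alpha m * r m + gamma m) :
  forall m, (sigma1 A D k n <= m <= p)%nat -> s m <= 1 / (INR k + 1).
Proof.
  intros m [Hsig Hmp].
  set (eps := 1 / (4 * (INR k + 1))).
  set (w := 1 / (4 * (INR k + 1) * (INR p + 1))).
  set (X := 4 * INR D * (INR k + 1)).
  pose proof (pos_INR k). pose proof (pos_INR p).
  assert (HD1 : 1 <= INR D) by (apply (le_INR 1); lia).
  assert (HX : 0 < X) by (unfold X; nra).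
  assert (Heps : 0 < eps) by (unfold eps; apply Rdiv_lt_0_compat; lra).
  assert (Hw : 0 < w) by (unfold w; apply Rdiv_lt_0_compat; nra).
  assert (Halpha01 : forall i, 0 <= alpha i <= 1) by (intro i; specialize (Halpha i); lra).
  assert (HAm : (A (n + Z.to_nat (ceilR (ln X))) < m)%nat)
    by (unfold sigma1 in Hsig; fold X in Hsig; lia).
  destruct (rate_seg_sum_ge alpha A n _ m Halpha01 HA_rate HAm) as [Hnm Htail].
  destruct (Nat.le_exists_sub n m Hnm) as [j [-> _]].
  rewrite Nat.add_sub in Htail. rewrite Nat.add_comm in Hmp |- *.
  assert (Hexcess := excess_unroll s alpha r v gamma (INR D) eps w n j Halpha01 Hgamma
    (Rlt_le _ _ Hw) (pos_INR D) ltac:(specialize (Hs_bound n); lra)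
    (fun i (Hij : (i < j)%nat) => Hi (n + i)%nat ltac:(lia)) Hiii).
  assert (Hprod_eps : seg_prod (fun i => 1 - alpha i) n j * INR D <= eps).
  { destruct (seg_prod_one_minus_le_exp alpha n j Halpha01) as [Hprod0 Hprod].
    pose proof (exp_opp_le_inv X _ HX (Rle_trans _ _ _ (le_ceilR_to_nat (ln X)) Htail)).
    apply Rle_trans with (/ X * INR D); [apply Rmult_le_compat_r; lra|].
    right. unfold X, eps. field. lra. }
  assert (Hw_eps : INR j * w <= eps).
  { assert (INR j <= INR p + 1) by (rewrite <- S_INR; apply le_INR; lia).
    apply Rle_trans with ((INR p + 1) * w); [apply Rmult_le_compat_r; lra|].
    right. unfold w, eps. field. lra. }
  assert (Hgamma_eps : seg_sum gamma n j <= eps).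
  { destruct j as [|j']; [simpl; lra|]. rewrite seg_sum_sum_f. apply Hii. }
  replace (1 / (INR k + 1)) with (4 * eps) by (unfold eps; field; lra).
  lra.
Qed.
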